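(* Consider the two-route traffic model described in the context, under assumptions (A1)–(A6) listed there. Then the system admits a unique equilibrium point $\overline{x}\in\Omega$, and $\overline{x}\in P:=\{x\in\Omega:\ 0\le x_1\le C_1,\ 0\le x_2\le C_2\}$.
   Context: Two routes $i=1,2$ connect an origin to a destination. For each route there are positive parameters $B_i$ (jam density), $C_i$ (critical density), $F_i$ (maximum capacity) with $C_i<B_i$; the traffic demand is a constant $\phi>0$. Set $v_i=F_i/C_i$ and $E_i=v_iB_i$ (virtual capacity). The state is $x=(x_1,x_2)\in\Omega:=[0,B_1]\times[0,B_2]$ and evolves by $\dot x_i=\min\{\phi R_i(x),S_i(x_i)\}-D_i(x_i)$, $i=1,2$, where $S_i(x_i)=F_i$ if $x_i<C_i$ and $S_i(x_i)=\frac{F_i}{B_i-C_i}(B_i-x_i)$ otherwise, and $D_i(x_i)=v_ix_i$ if $x_i<C_i$ and $D_i(x_i)=F_i$ otherwise. The routing ratios are $R_i(x)=(1-\alpha)r_i^0+\alpha\, r_i(\tau(x))$, where $\alpha\in(0,1]$, $r_1^0,r_2^0\ge0$ with $r_1^0+r_2^0=1$, $\tau(x)=(\tau_1(x_1),\tau_2(x_2))$ with each $\tau_i$ a $C^1$ strictly increasing function, and $0\le r_i(\tau(x))\le1$, $r_1(\tau(x))+r_2(\tau(x))=1$ on $\Omega$, with $x\mapsto r_i(\tau(x))$ globally Lipschitz and $C^1$ on $\Omega$. Assumptions: (A1) $\phi<F_1+F_2$; (A2)–(A3) the properties of $\tau_i,r_i$ just listed; (A4) strict monotonicity $\partial R_i/\partial\tau_j>0$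 for $i\ne j$; (A5) $F_i>(1-\alpha)\phi r_i^0$, $i=1,2$; (A6) $\phi<E_i$, $i=1,2$. *)

From Stdlib Require Import Reals.
From Coquelicot Require Import Coquelicot.
Open Scope R_scope.

Definition supply (B C F x : R) : R :=
  if Rlt_dec x C then F else F / (B - C) * (B - x).

Definition demand (C F x : R) : R :=
  if Rlt_dec x C then (F / C) * x else F.

Definition routing (alpha ri0 : R) (ri : R -> R -> R) (t1 t2 : R) : R :=
  (1 - alpha) * ri0 + alpha * ri t1 t2.

(* Right-hand side of  xdot_i = min{phi R_i(x), S_i(x_i)} - D_i(x_i) *)
Definition field_i (phi alpha ri0 : R) (ri : R -> R -> R) (tau1 tau2 : R -> R)
  (Bi Ci Fi : R) (x1 x2 xi : R) : R :=
  Rmin (phi * routing alpha ri0 ri (tau1 x1) (tau2 x2)) (supply Bi Ci Fi xi)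
  - demand Ci Fi xi.

Definition inOmega (B1 B2 x1 x2 : R) : Prop := 0 <= x1 <= B1 /\ 0 <= x2 <= B2.

Definition tr_C1_on_Omega (B1 B2 : R) (g : R -> R -> R) : Prop :=
  exists d1 d2 : R -> R -> R,
    forall x1 x2, inOmega B1 B2 x1 x2 ->
      differentiable_pt_lim g x1 x2 (d1 x1 x2) (d2 x1 x2) /\
      continuity_2d_pt d1 x1 x2 /\ continuity_2d_pt d2 x1 x2.

Definition tr_Lipschitz_on_Omega (B1 B2 : R) (g : R -> R -> R) : Prop :=
  exists L, 0 <= L /\ forall x1 x2 y1 y2,
    inOmega B1 B2 x1 x2 -> inOmega B1 B2 y1 y2 ->
    Rabs (g x1 x2 - g y1 y2) <= L * (Rabs (x1 - y1) + Rabs (x2 - y2)).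

Definition tr_C1_fun (tau : R -> R) : Prop :=
  exists dtau : R -> R, forall t, is_derive tau t (dtau t) /\ continuous dtau t.

(* An equilibrium is a point with [x_i = g_i (R_i x)], where
   [g_i s = C_i/F_i min (phi s, F_i) <= C_i]: a congested route can balance its
   flows only at the critical density, whence [x] lies in [P].  As [R_1 + R_2 = 1]
   every equilibrium has the form [(g_1 s, g_2 (1 - s))] with [s = R_1 x], and
   the intermediate value theorem yields an [s] that reproduces itself.  For
   uniqueness, [R_1 x <= R_1 y] forces [x_1 <= y_1] and [y_2 <= x_2], and the
   cross monotonicity (A4) at the mixed point [(x_1, y_2)] gives
   [R_1 y <= R_1 (x_1, y_2) <= R_1 x]; so both equilibria share the split [s]. *)

From Stdlib Require Import Reals Lra.
From Coquelicot Require Import Coquelicot.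
Open Scope R_scope.

Lemma Rabs_Rmin_sub_le (a b c : R) : Rabs (Rmin a c - Rmin b c) <= Rabs (a - b).
Proof.
  unfold Rmin; destruct (Rle_dec a c), (Rle_dec b c);
    unfold Rabs; repeat destruct Rcase_abs; lra.
Qed.

Definition clamp01 (s : R) : R := Rmax 0 (Rmin s 1).

Lemma clamp01_range (s : R) : 0 <= clamp01 s <= 1.
Proof. unfold clamp01, Rmax, Rmin; repeat destruct Rle_dec; lra. Qed.

Lemma clamp01_id (s : R) : 0 <= s <= 1 -> clamp01 s = s.
Proof. intros; unfold clamp01, Rmax, Rmin; repeat destruct Rle_dec; lra. Qed.

Lemma Rabs_clamp01_sub_le (s t : R) : Rabs (clamp01 s - clamp01 t) <= Rabs (s - t).
Proof.
  unfold clamp01, Rmax, Rmin; repeat destruct Rle_dec;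
    unfold Rabs; repeat destruct Rcase_abs; lra.
Qed.

Lemma Lipschitz_continuity (f : R -> R) (K : R) :
  (forall s t, Rabs (f s - f t) <= K * Rabs (s - t)) -> continuity f.
Proof.
  intros Hf x eps Heps.
  assert (HK : 0 < Rabs K + 1) by (pose proof (Rabs_pos K); lra).
  exists (eps / (Rabs K + 1)); split; [apply Rdiv_lt_0_compat; lra|].
  intros y [_ Hy]; simpl in *; unfold R_dist in *.
  apply (Rmult_lt_compat_r (Rabs K + 1)) in Hy; [|lra].
  replace (eps / (Rabs K + 1) * (Rabs K + 1)) with eps in Hy by (field; lra).
  pose proof (Rle_abs K); pose proof (Rabs_pos (y - x)).
  specialize (Hf y x); nra.
Qed.

Lemma C1_fun_continuity (tau : R -> R) : tr_C1_fun tau -> continuity tau.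
Proof.
  intros [dtau Hdtau] x; apply continuity_pt_filterlim.
  apply (ex_derive_continuous tau x); exists (dtau x); apply Hdtau.
Qed.

Lemma derive_pos_comp_le (f tau : R -> R) (a b : R) :
  continuity tau -> (forall s t, s < t -> tau s < tau t) ->
  (forall z, a <= z <= b -> exists d, is_derive f (tau z) d /\ 0 < d) ->
  a <= b -> f (tau a) <= f (tau b).
Proof.
  intros Htau Hinc Hf Hab.
  destruct (Req_dec a b) as [<-|Hne]; [lra|].
  assert (Htab : tau a < tau b) by (apply Hinc; lra).
  assert (Hf' : forall x, tau a <= x <= tau b -> exists d, is_derive f x d /\ 0 < d).
  { intros x Hx.
    destruct (IVT_gen tau a b x Htau) as [z [Hz <-]];
      rewrite Rmin_left, Rmax_right in * by lra; auto. }
  apply Rlt_le, (incr_function_le f (tau a) (tau b) (Derive f)); simpl; try lra;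
    intros x Hxa Hxb; destruct (Hf' x (conj Hxa Hxb)) as [d [Hd Hdpos]];
    rewrite (is_derive_unique _ _ _ Hd); auto.
Qed.

Section RoutingFixedPoint.

Variables (B1 B2 : R) (g1 g2 : R -> R) (R1 R2 : R -> R -> R).

Hypothesis g1_nondecreasing : forall s t, s <= t -> g1 s <= g1 t.
Hypothesis g2_nondecreasing : forall s t, s <= t -> g2 s <= g2 t.
Hypothesis R_sum : forall x1 x2, inOmega B1 B2 x1 x2 -> R1 x1 x2 + R2 x1 x2 = 1.
Hypothesis R1_nondecreasing2 : forall x1 x2 y2,
  0 <= x1 <= B1 -> 0 <= x2 -> x2 <= y2 -> y2 <= B2 -> R1 x1 x2 <= R1 x1 y2.
Hypothesis R2_nondecreasing1 : forall x1 y1 x2,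
  0 <= x2 <= B2 -> 0 <= x1 -> x1 <= y1 -> y1 <= B1 -> R2 x1 x2 <= R2 y1 x2.

Definition routing_fixed_point (x1 x2 : R) : Prop :=
  inOmega B1 B2 x1 x2 /\ x1 = g1 (R1 x1 x2) /\ x2 = g2 (R2 x1 x2).

Lemma routing_fixed_point_R1_le (x1 x2 y1 y2 : R) :
  routing_fixed_point x1 x2 -> routing_fixed_point y1 y2 ->
  R1 x1 x2 <= R1 y1 y2 -> R1 y1 y2 <= R1 x1 x2.
Proof.
  intros [[Hx1 Hx2] [Ex1 Ex2]] [[Hy1 Hy2] [Ey1 Ey2]] Hle.
  assert (Hsx := R_sum x1 x2 (conj Hx1 Hx2)).
  assert (Hsy := R_sum y1 y2 (conj Hy1 Hy2)).
  assert (Hsxy := R_sum x1 y2 (conj Hx1 Hy2)).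
  assert (H1 : x1 <= y1) by (rewrite Ex1, Ey1; apply g1_nondecreasing; lra).
  assert (H2 : y2 <= x2) by (rewrite Ex2, Ey2; apply g2_nondecreasing; lra).
  assert (R1 x1 y2 <= R1 x1 x2) by (apply R1_nondecreasing2; lra).
  assert (R2 x1 y2 <= R2 y1 y2) by (apply R2_nondecreasing1; lra).
  lra.
Qed.

Lemma routing_fixed_point_unique (x1 x2 y1 y2 : R) :
  routing_fixed_point x1 x2 -> routing_fixed_point y1 y2 -> x1 = y1 /\ x2 = y2.
Proof.
  intros Hx Hy.
  assert (HR1 : R1 x1 x2 = R1 y1 y2).
  { destruct (Rle_or_lt (R1 x1 x2) (R1 y1 y2)) as [H|H].
    - pose proof (routing_fixed_point_R1_le _ _ _ _ Hx Hy H); lra.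
    - pose proof (routing_fixed_point_R1_le _ _ _ _ Hy Hx (Rlt_le _ _ H)); lra. }
  destruct Hx as [Hx [Ex1 Ex2]], Hy as [Hy [Ey1 Ey2]].
  assert (HR2 : R2 x1 x2 = R2 y1 y2) by (pose proof (R_sum _ _ Hx); pose proof (R_sum _ _ Hy); lra).
  split; [rewrite Ex1, Ey1, HR1 | rewrite Ex2, Ey2, HR2]; reflexivity.
Qed.

Hypothesis g1_range : forall s, 0 <= s <= 1 -> 0 <= g1 s <= B1.
Hypothesis g2_range : forall s, 0 <= s <= 1 -> 0 <= g2 s <= B2.
Hypothesis g1_Lipschitz : exists K, 0 <= K /\ forall s t, Rabs (g1 s - g1 t) <= K * Rabs (s - t).
Hypothesis g2_Lipschitz : exists K, 0 <= K /\ forall s t, Rabs (g2 s - g2 t) <= K * Rabs (s - t).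
Hypothesis R1_range : forall x1 x2, inOmega B1 B2 x1 x2 -> 0 <= R1 x1 x2 <= 1.
Hypothesis R1_Lipschitz : tr_Lipschitz_on_Omega B1 B2 R1.

Lemma routing_fixed_point_exists : exists x1 x2, routing_fixed_point x1 x2.
Proof.
  destruct R1_Lipschitz as [L [HL HR1]].
  destruct g1_Lipschitz as [K1 [HK1 Hg1]], g2_Lipschitz as [K2 [HK2 Hg2]].
  pose (x1 s := g1 (clamp01 s)); pose (x2 s := g2 (1 - clamp01 s)).
  assert (Hin : forall s, inOmega B1 B2 (x1 s) (x2 s)).
  { intro s; pose proof (clamp01_range s); split; [apply g1_range | apply g2_range]; lra. }
  (* A zero of [k] is a split [s] of the demand reproduced by the densities it
     induces; clamping keeps those densities in Omega, where [R1] is Lipschitz. *)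
  pose (k s := R1 (x1 s) (x2 s) - clamp01 s).
  assert (Hk : continuity k).
  { apply (Lipschitz_continuity k (L * (K1 + K2) + 1)); intros s t.
    pose proof (Rabs_clamp01_sub_le s t) as Hc.
    pose proof (Rabs_pos (clamp01 s - clamp01 t)) as Hc0.
    pose proof (Hg1 (clamp01 s) (clamp01 t)) as H1.
    pose proof (Hg2 (1 - clamp01 s) (1 - clamp01 t)) as H2.
    replace (1 - clamp01 s - (1 - clamp01 t)) with (- (clamp01 s - clamp01 t)) in H2 by ring.
    rewrite Rabs_Ropp in H2.
    pose proof (HR1 _ _ _ _ (Hin s) (Hin t)) as HR.
    unfold k.
    replace (R1 (x1 s) (x2 s) - clamp01 s - (R1 (x1 t) (x2 t) - clamp01 t))
      with (R1 (x1 s) (x2 s) - R1 (x1 t) (x2 t) + - (clamp01 s - clamp01 t)) by ring.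
    eapply Rle_trans; [apply Rabs_triang|]; rewrite Rabs_Ropp.
    assert (HR' : Rabs (R1 (x1 s) (x2 s) - R1 (x1 t) (x2 t))
                  <= L * (K1 + K2) * Rabs (clamp01 s - clamp01 t)).
    { eapply Rle_trans; [exact HR|]; rewrite Rmult_assoc.
      apply Rmult_le_compat_l; [lra|]; unfold x1, x2; lra. }
    assert (HLK : 0 <= L * (K1 + K2)) by (apply Rmult_le_pos; lra).
    pose proof (Rmult_le_compat_l _ _ _ HLK Hc); lra. }
  destruct (IVT_gen k 0 1 0 Hk) as [s [Hs Hks]].
  { assert (Hk01 : k 1 <= 0 <= k 0).
    { pose proof (R1_range _ _ (Hin 0)); pose proof (R1_range _ _ (Hin 1)).
      unfold k; rewrite !clamp01_id by lra; lra. }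
    split; [apply (Rle_trans _ (k 1)); [apply Rmin_r | lra]
           | apply (Rle_trans _ (k 0)); [lra | apply Rmax_l]]. }
  rewrite Rmin_left, Rmax_right in Hs by lra.
  assert (HR1s : R1 (x1 s) (x2 s) = s) by (unfold k in Hks; rewrite clamp01_id in Hks by lra; lra).
  assert (HR2s : R2 (x1 s) (x2 s) = 1 - s) by (pose proof (R_sum _ _ (Hin s)); lra).
  exists (x1 s), (x2 s); split; [apply Hin|].
  rewrite HR1s, HR2s; unfold x1, x2; rewrite clamp01_id by lra; auto.
Qed.

End RoutingFixedPoint.

(* The density at which the outflow [F/C x] of an uncongested route equals
   its inflow [min (phi s) F]. *)
Definition equilibrium_density (phi C F s : R) : R := Rmin (phi * s) F * C / F.

Lemma equilibrium_density_nondecreasing (phi C F s t : R) :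
  0 < phi -> 0 < C -> 0 < F -> s <= t ->
  equilibrium_density phi C F s <= equilibrium_density phi C F t.
Proof.
  intros Hphi HC HF Hst; unfold equilibrium_density, Rdiv.
  apply Rmult_le_compat_r; [left; apply Rinv_0_lt_compat; lra|].
  apply Rmult_le_compat_r; [lra|].
  apply Rle_min_compat_r, Rmult_le_compat_l; lra.
Qed.

Lemma equilibrium_density_range (phi C F s : R) :
  0 < phi -> 0 < C -> 0 < F -> 0 <= s -> 0 <= equilibrium_density phi C F s <= C.
Proof.
  intros Hphi HC HF Hs; unfold equilibrium_density.
  assert (0 <= Rmin (phi * s) F) by (apply Rmin_glb; nra).
  pose proof (Rmin_r (phi * s) F).
  split.
  - apply Rmult_le_pos; [nra | left; apply Rinv_0_lt_compat; lra].
  - apply (Rmult_le_reg_r F); [lra|]; unfold Rdiv.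
    rewrite Rmult_assoc, Rinv_l by lra; nra.
Qed.

Lemma equilibrium_density_Lipschitz (phi C F : R) :
  0 < phi -> 0 < C -> 0 < F ->
  exists K, 0 <= K /\ forall s t,
    Rabs (equilibrium_density phi C F s - equilibrium_density phi C F t) <= K * Rabs (s - t).
Proof.
  intros Hphi HC HF.
  assert (HCF : 0 < C / F) by (apply Rdiv_lt_0_compat; lra).
  exists (phi * (C / F)); split; [nra|]; intros s t; unfold equilibrium_density.
  replace (Rmin (phi * s) F * C / F - Rmin (phi * t) F * C / F)
    with ((Rmin (phi * s) F - Rmin (phi * t) F) * (C / F)) by (field; lra).
  rewrite Rabs_mult, (Rabs_pos_eq (C / F)) by lra.
  pose proof (Rabs_Rmin_sub_le (phi * s) (phi * t) F) as H.
  rewrite <- Rmult_minus_distr_l, Rabs_mult, (Rabs_pos_eq phi) in H by lra.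
  replace (phi * (C / F) * Rabs (s - t)) with (phi * Rabs (s - t) * (C / F)) by ring.
  apply Rmult_le_compat_r; lra.
Qed.

Lemma flow_balance_iff (B C F phi s x : R) :
  0 < C -> C < B -> 0 < F -> 0 <= x ->
  Rmin (phi * s) (supply B C F x) - demand C F x = 0 <-> x = equilibrium_density phi C F s.
Proof.
  intros HC HCB HF Hx; unfold supply, demand, equilibrium_density.
  pose proof (Rmin_r (phi * s) F) as HmF.
  destruct (Rlt_dec x C) as [Hlt|Hge].
  - split; intro H.
    + replace (Rmin (phi * s) F) with (F / C * x) by lra; field; lra.
    + rewrite H; field; lra.
  - (* in congestion the supply [F/(B-C) (B-x)] reaches [F] only at [x = C] *)
    assert (Hq : F / (B - C) * (B - C) = F) by (field; lra).
    assert (Hq0 : 0 < F / (B - C)) by (apply Rdiv_lt_0_compat; lra).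
    split; intro H.
    + assert (HxC : x = C).
      { pose proof (Rmin_r (phi * s) (F / (B - C) * (B - x))); nra. }
      subst x; rewrite Hq in H.
      replace (Rmin (phi * s) F) with F by lra; field; lra.
    + assert (HxF : x * F = Rmin (phi * s) F * C) by (rewrite H; field; lra).
      assert (Hm : Rmin (phi * s) F = F) by nra.
      assert (HxC : x = C) by nra.
      rewrite HxC, Hq, Hm; ring.
Qed.

Lemma routing_add (alpha r10 r20 : R) (r1 r2 : R -> R -> R) (t1 t2 : R) :
  r10 + r20 = 1 -> r1 t1 t2 + r2 t1 t2 = 1 ->
  routing alpha r10 r1 t1 t2 + routing alpha r20 r2 t1 t2 = 1.
Proof.
  intros H0 H; unfold routing.
  transitivity ((1 - alpha) * (r10 + r20) + alpha * (r1 t1 t2 + r2 t1 t2)); [ring|].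
  rewrite H0, H; ring.
Qed.

Lemma routing_range (alpha r0 : R) (r : R -> R -> R) (t1 t2 : R) :
  0 <= alpha <= 1 -> 0 <= r0 <= 1 -> 0 <= r t1 t2 <= 1 ->
  0 <= routing alpha r0 r t1 t2 <= 1.
Proof. intros; unfold routing; nra. Qed.

Lemma tr_Lipschitz_on_Omega_affine (B1 B2 a b : R) (g : R -> R -> R) :
  0 <= b -> tr_Lipschitz_on_Omega B1 B2 g ->
  tr_Lipschitz_on_Omega B1 B2 (fun x1 x2 => a + b * g x1 x2).
Proof.
  intros Hb [L [HL Hg]]; exists (b * L); split; [nra|].
  intros x1 x2 y1 y2 Hx Hy.
  replace (a + b * g x1 x2 - (a + b * g y1 y2)) with (b * (g x1 x2 - g y1 y2)) by ring.
  rewrite Rabs_mult, (Rabs_pos_eq b), Rmult_assoc by lra.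
  apply Rmult_le_compat_l; auto.
Qed.

Theorem theorem1
  (B1 B2 C1 C2 F1 F2 phi alpha r10 r20 : R)
  (tau1 tau2 : R -> R) (r1 r2 : R -> R -> R)
  (* standing parameter assumptions *)
  (HC1 : 0 < C1) (HC2 : 0 < C2) (HCB1 : C1 < B1) (HCB2 : C2 < B2)
  (HF1 : 0 < F1) (HF2 : 0 < F2) (Hphi : 0 < phi)
  (Halpha : 0 < alpha <= 1)
  (Hr10 : 0 <= r10) (Hr20 : 0 <= r20) (Hr0 : r10 + r20 = 1)
  (* (A1) *)
  (HA1 : phi < F1 + F2)
  (* (A2) tau_i are C^1 and strictly increasing *)
  (Htau1C1 : tr_C1_fun tau1) (Htau2C1 : tr_C1_fun tau2)
  (Htau1inc : forall s t, s < t -> tau1 s < tau1 t)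
  (Htau2inc : forall s t, s < t -> tau2 s < tau2 t)
  (* (A3) properties of r_i on Omega *)
  (Hr1bnd : forall x1 x2, inOmega B1 B2 x1 x2 ->
             0 <= r1 (tau1 x1) (tau2 x2) <= 1)
  (Hr2bnd : forall x1 x2, inOmega B1 B2 x1 x2 ->
             0 <= r2 (tau1 x1) (tau2 x2) <= 1)
  (Hrsum : forall x1 x2, inOmega B1 B2 x1 x2 ->
             r1 (tau1 x1) (tau2 x2) + r2 (tau1 x1) (tau2 x2) = 1)
  (Hr1Lip : tr_Lipschitz_on_Omega B1 B2 (fun x1 x2 => r1 (tau1 x1) (tau2 x2)))
  (Hr2Lip : tr_Lipschitz_on_Omega B1 B2 (fun x1 x2 => r2 (tau1 x1) (tau2 x2)))
  (Hr1C1 : tr_C1_on_Omega B1 B2 (fun x1 x2 => r1 (tau1 x1) (tau2 x2)))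
  (Hr2C1 : tr_C1_on_Omega B1 B2 (fun x1 x2 => r2 (tau1 x1) (tau2 x2)))
  (* (A4) dR_1/dtau_2 > 0 and dR_2/dtau_1 > 0 (at tau(x), x in Omega) *)
  (HA4_12 : forall x1 x2, inOmega B1 B2 x1 x2 ->
     exists d, is_derive (fun t => routing alpha r10 r1 (tau1 x1) t) (tau2 x2) d
               /\ 0 < d)
  (HA4_21 : forall x1 x2, inOmega B1 B2 x1 x2 ->
     exists d, is_derive (fun t => routing alpha r20 r2 t (tau2 x2)) (tau1 x1) d
               /\ 0 < d)
  (* (A5) *)
  (HA5_1 : F1 > (1 - alpha) * phi * r10)
  (HA5_2 : F2 > (1 - alpha) * phi * r20)
  (* (A6)  phi < E_i = v_i B_i with v_i = F_i / C_i *)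
  (HA6_1 : phi < F1 / C1 * B1)
  (HA6_2 : phi < F2 / C2 * B2) :
  exists x1 x2 : R,
    inOmega B1 B2 x1 x2 /\
    field_i phi alpha r10 r1 tau1 tau2 B1 C1 F1 x1 x2 x1 = 0 /\
    field_i phi alpha r20 r2 tau1 tau2 B2 C2 F2 x1 x2 x2 = 0 /\
    (0 <= x1 <= C1 /\ 0 <= x2 <= C2) /\
    (forall y1 y2, inOmega B1 B2 y1 y2 ->
       field_i phi alpha r10 r1 tau1 tau2 B1 C1 F1 y1 y2 y1 = 0 ->
       field_i phi alpha r20 r2 tau1 tau2 B2 C2 F2 y1 y2 y2 = 0 ->
       y1 = x1 /\ y2 = x2).
Proof.
  pose (g1 := equilibrium_density phi C1 F1); pose (g2 := equilibrium_density phi C2 F2).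
  pose (R1 x1 x2 := routing alpha r10 r1 (tau1 x1) (tau2 x2)).
  pose (R2 x1 x2 := routing alpha r20 r2 (tau1 x1) (tau2 x2)).
  assert (Hfixed : forall y1 y2, inOmega B1 B2 y1 y2 ->
    (field_i phi alpha r10 r1 tau1 tau2 B1 C1 F1 y1 y2 y1 = 0 /\
     field_i phi alpha r20 r2 tau1 tau2 B2 C2 F2 y1 y2 y2 = 0 <->
     routing_fixed_point B1 B2 g1 g2 R1 R2 y1 y2)).
  { intros y1 y2 Hy; unfold routing_fixed_point, field_i.
    rewrite !flow_balance_iff by (auto; apply Hy); tauto. }
  assert (Hg1 : forall s, 0 <= s -> 0 <= g1 s <= C1) by (intros; apply equilibrium_density_range; auto).
  assert (Hg2 : forall s, 0 <= s -> 0 <= g2 s <= C2) by (intros; apply equilibrium_density_range; auto).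
  assert (Hsum : forall x1 x2, inOmega B1 B2 x1 x2 -> R1 x1 x2 + R2 x1 x2 = 1)
    by (intros; apply routing_add; auto).
  assert (HR1 : forall x1 x2, inOmega B1 B2 x1 x2 -> 0 <= R1 x1 x2 <= 1)
    by (intros; apply routing_range; auto; lra).
  assert (HR12 : forall a b c, 0 <= a <= B1 -> 0 <= b -> b <= c -> c <= B2 -> R1 a b <= R1 a c).
  { intros a b c Ha Hb Hbc Hc; apply (derive_pos_comp_le (fun t => routing alpha r10 r1 (tau1 a) t));
      auto using C1_fun_continuity; intros z Hz; apply HA4_12; split; lra. }
  assert (HR21 : forall a b c, 0 <= c <= B2 -> 0 <= a -> a <= b -> b <= B1 -> R2 a c <= R2 b c).
  { intros a b c Hc Ha Hab Hb; apply (derive_pos_comp_le (fun t => routing alpha r20 r2 t (tau2 c)));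
      auto using C1_fun_continuity; intros z Hz; apply HA4_21; split; lra. }
  destruct (routing_fixed_point_exists B1 B2 g1 g2 R1 R2 Hsum) as [x1 [x2 Hx]]; auto.
  - intros s Hs; pose proof (Hg1 s (proj1 Hs)); lra.
  - intros s Hs; pose proof (Hg2 s (proj1 Hs)); lra.
  - apply equilibrium_density_Lipschitz; auto.
  - apply equilibrium_density_Lipschitz; auto.
  - apply tr_Lipschitz_on_Omega_affine; [lra | exact Hr1Lip].
  - pose proof Hx as [HxO [Ex1 Ex2]].
    destruct (proj2 (Hfixed x1 x2 HxO) Hx) as [Fx1 Fx2].
    pose proof (HR1 x1 x2 HxO); pose proof (Hsum x1 x2 HxO).
    exists x1, x2; split; [|split; [|split; [|split]]]; auto.
    + split; [rewrite Ex1; apply Hg1 | rewrite Ex2; apply Hg2]; lra.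
    + intros y1 y2 Hy Fy1 Fy2.
      apply (routing_fixed_point_unique B1 B2 g1 g2 R1 R2); auto;
        [intros; apply equilibrium_density_nondecreasing; auto .. | apply Hfixed; auto].
Qed.
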